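(* Let $A\in\mathcal{PM}(n)$. If the poset vectors of $A$ have pairwise distinct support sizes (i.e., $|\mathrm{supp}(v)|\ne|\mathrm{supp}(w)|$ for all distinct poset vectors $v,w$ of $A$), then $\mathrm{Aut}(A)=\{Q\in\mathfrak P_n: Q^TAQ=A\}$ is trivial, i.e., equals $\{I_n\}$.
   Context: Let $X_n=\{0,1,\ldots,n-1\}$. A naturally labeled (NL) poset on $X_n$ is a partial order $\preceq$ on $X_n$ such that $x\preceq y$ implies $x\le y$ in the usual integer order. Its poset matrix is the $n\times n$ $(0,1)$-matrix $A=(a_{i,j})_{i,j\in X_n}$ with $a_{i,j}=1$ if $j\preceq i$ and $0$ otherwise; $\mathcal{PM}(n)$ is the set of all such matrices. For a row vector $v\in\{0,1\}^n$, $A^v=\begin{bmatrix}A&\mathbf{0}\\ v&1\end{bmatrix}$, and $v$ is a poset vector of $A$ if $A^v\in\mathcal{PM}(n+1)$. $\mathrm{supp}(v)=\{j: v_j=1\}$. $\mathfrak P_n$ is the group of $n\times n$ permutation matrices. *)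

(* Matrices over int, indices 'I_n = X_n. *)
From mathcomp Require Import all_boot all_order all_algebra all_fingroup.
Set Implicit Arguments. Unset Strict Implicit. Unset Printing Implicit Defensive.
Import GRing.Theory Num.Theory.
Local Open Scope ring_scope.

(* A is a (0,1)-matrix and j <=_P i :<-> A i j = 1 is a naturally labeled
   partial order: reflexive, transitive, and j <=_P i implies j <= i
   (which also yields antisymmetry). *)
Definition is_poset_mx (n : nat) (A : 'M[int]_n) : Prop :=
  [/\ (forall i j, A i j = 0 \/ A i j = 1),
      (forall i, A i i = 1),
      (forall i j, A i j = 1 -> (j <= i)%N),
      (forall i j k, A i j = 1 -> A j k = 1 -> A i k = 1) &
      (forall i j, A i j = 1 -> A j i = 1 -> i = j)].

Definition ext_mx (n : nat) (A : 'M[int]_n) (v : 'rV[int]_n) : 'M[int]_(n + 1) :=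
  block_mx A 0 v 1%:M.

Definition is_01_row (n : nat) (v : 'rV[int]_n) : Prop :=
  forall j, v 0 j = 0 \/ v 0 j = 1.

Definition is_poset_vector (n : nat) (A : 'M[int]_n) (v : 'rV[int]_n) : Prop :=
  is_01_row v /\ is_poset_mx (ext_mx A v).

Definition supp (n : nat) (v : 'rV[int]_n) : {set 'I_n} := [set j | v 0 j == 1].

From mathcomp Require Import all_boot all_order all_algebra all_fingroup.

Set Implicit Arguments.
Unset Strict Implicit.
Unset Printing Implicit Defensive.

Local Open Scope ring_scope.

(* Each row of a poset matrix is the characteristic vector of a principal
   down-set, hence a poset vector, and distinct elements have distinct rows by
   antisymmetry.  An automorphism [perm_mx s] carries the row of [x] to the row
   of [s x] with columns relabelled by [s], so the two rows have supports of
   equal size; distinct support sizes then force them to coincide, i.e. s x = x. *)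

Variant ext_ord_spec n : 'I_(n + 1) -> Type :=
  | ExtOrdOld (j : 'I_n) : ext_ord_spec (lshift 1 j)
  | ExtOrdNew : ext_ord_spec (rshift n ord0).

Lemma ext_ordP n (i : 'I_(n + 1)) : ext_ord_spec i.
Proof.
case: (split_ordP i) => [j -> | k ->]; first exact: ExtOrdOld.
by rewrite (ord1 k); apply: ExtOrdNew.
Qed.

Section ExtMatrix.

Variables (n : nat) (A : 'M[int]_n) (v : 'rV[int]_n).

Lemma ext_mx_oldold i j : ext_mx A v (lshift 1 i) (lshift 1 j) = A i j.
Proof. exact: block_mxEul. Qed.

Lemma ext_mx_oldnew i : ext_mx A v (lshift 1 i) (rshift n ord0) = 0.
Proof. by rewrite /ext_mx block_mxEur mxE. Qed.

Lemma ext_mx_newold j : ext_mx A v (rshift n ord0) (lshift 1 j) = v 0 j.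
Proof. by rewrite /ext_mx block_mxEdl. Qed.

Lemma ext_mx_newnew : ext_mx A v (rshift n ord0) (rshift n ord0) = 1.
Proof. by rewrite /ext_mx block_mxEdr mxE. Qed.

Definition ext_mxE := (ext_mx_oldold, ext_mx_oldnew, ext_mx_newold, ext_mx_newnew).

End ExtMatrix.

Section PosetMatrix.

Variables (n : nat) (A : 'M[int]_n).
Hypothesis posetA : is_poset_mx A.

Lemma downset_is_poset_vector (v : 'rV[int]_n) :
  is_01_row v -> (forall j k, v 0 j = 1 -> A j k = 1 -> v 0 k = 1) ->
  is_poset_vector A v.
Proof.
case: posetA => A01 Arefl Alab Atrans Aanti v01 v_down; split=> //.
have zero_neq1 : (0 : int) = 1 -> False by [].
split.
- move=> i j; case: (ext_ordP i) => *; case: (ext_ordP j) => *;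
    by rewrite ext_mxE; auto.
- by move=> i; case: (ext_ordP i) => *; rewrite ext_mxE.
- move=> i j; case: (ext_ordP i) => [i'|]; case: (ext_ordP j) => [j'|];
    rewrite ext_mxE /= ?addn0;
    by [move/Alab | move/zero_neq1 | move=> _; exact: ltnW | move=> _].
- move=> i j k; case: (ext_ordP i) => [i'|]; case: (ext_ordP j) => [j'|];
    case: (ext_ordP k) => [k'|]; rewrite !ext_mxE;
    by [exact: Atrans | exact: v_down | move/zero_neq1 | move=> _ /zero_neq1 | move=> *].
- move=> i j; case: (ext_ordP i) => [i'|]; case: (ext_ordP j) => [j'|];
    rewrite !ext_mxE;
    by [move=> /Aanti anti /anti -> | move/zero_neq1 | move=> _ /zero_neq1 | move=> *].
Qed.

Lemma row_is_poset_vector x : is_poset_vector A (row x A).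
Proof.
case: posetA => A01 _ _ Atrans _.
apply: downset_is_poset_vector => [j | j k]; rewrite !mxE.
  exact: A01.
exact: Atrans.
Qed.

Lemma poset_row_inj : injective (fun x : 'I_n => row x A).
Proof.
case: posetA => _ Arefl _ _ Aanti x y rxy.
have rowE j : A x j = A y j.
  by have := congr1 (fun r : 'rV_n => r 0 j) rxy; rewrite !mxE.
by apply: Aanti; [rewrite rowE | rewrite -rowE].
Qed.

End PosetMatrix.

Lemma conj_perm_mxE (R : pzRingType) n (A : 'M[R]_n) (s : 'S_n) i j :
  ((perm_mx s)^T *m A *m perm_mx s) (s i) (s j) = A i j.
Proof.
by rewrite tr_perm_mx -row_permE -[s in perm_mx s]invgK -col_permE !mxE !permK.
Qed.

Lemma card_supp_row_perm n (A : 'M[int]_n) (s : 'S_n) x :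
  (forall i j, A (s i) (s j) = A i j) ->
  #|supp (row (s x) A)| = #|supp (row x A)|.
Proof.
move=> autA; rewrite -(card_preimset _ (@perm_inj _ s)); apply: eq_card => j.
by rewrite !inE !mxE autA.
Qed.

Theorem theorem3p5 (n : nat) (A : 'M[int]_n) :
  is_poset_mx A ->
  (forall v w : 'rV[int]_n, is_poset_vector A v -> is_poset_vector A w ->
     v <> w -> #|supp v| <> #|supp w|) ->
  forall Q : 'M[int]_n, is_perm_mx Q -> Q^T *m A *m Q = A -> Q = 1%:M.
Proof.
move=> posetA supp_inj Q /existsP[s /eqP ->] autQ.
have autA i j : A (s i) (s j) = A i j by rewrite -{1}autQ conj_perm_mxE.
have s_fix x : s x = x.
  apply: (poset_row_inj posetA).
  have [// | neq] := eqVneq (row (s x) A) (row x A).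
  have [Pv Pw] := (row_is_poset_vector posetA (s x), row_is_poset_vector posetA x).
  by case: (supp_inj _ _ Pv Pw (elimN eqP neq) (card_supp_row_perm x autA)).
suff -> : s = 1%g by rewrite perm_mx1.
by apply/permP => x; rewrite s_fix perm1.
Qed.
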